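(* Let $\lambda=(\lambda_1,\dots,\lambda_l)$ be a partition and $0\le k\le l-1$. If $\alpha=(\alpha_1,\alpha_2,\dots)$ (finitely many nonzero entries) satisfies $\mathrm{wt}\,\alpha<N_{\lambda,k}$, then $\partial^\alpha s_\lambda\big(\sum_{i=1}^k[x_i]\big)=0$ (for $k=0$ this means $\partial^\alpha s_\lambda(0)=0$).
   Context: For $t=(t_1,t_2,\dots)$ define $p_m(t)$ by $\exp(\sum_{m\ge1}t_mk^m)=\sum_{m\ge0}p_m(t)k^m$, $p_m=0$ for $m<0$; $s_\lambda(t)=\det(p_{\lambda_i-i+j}(t))_{1\le i,j\le l}$. $[x]=(x,x^2/2,x^3/3,\dots)$. $\partial_i=\partial/\partial t_i$, $\partial^\alpha=\partial_1^{\alpha_1}\partial_2^{\alpha_2}\cdots$, $\mathrm{wt}\,\alpha=\sum_i i\alpha_i$. $N_{\lambda,k}=\lambda_{k+1}+\dots+\lambda_l$. *)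

From mathcomp Require Import all_boot all_order all_algebra.
From mathcomp Require Import mpoly.
Set Implicit Arguments. Unset Strict Implicit. Unset Printing Implicit Defensive.
Import Order.TTheory GRing.Theory Num.Theory.
Local Open Scope ring_scope.

(* Variables t_1, ..., t_N are the mpoly variables 'X_0, ..., 'X_(N-1):
   'X_i stands for t_(i+1). *)

(* p_m(t) = coefficient of k^m in exp(sum_j t_j k^j)
          = sum over multi-indices beta with sum_j j*beta_j = m
            of prod_j t_j^(beta_j) / beta_j!  (truncated to t_1..t_N). *)
Definition schur_p (R : fieldType) (N m : nat) : {mpoly R[N]} :=
  \sum_(b : 'X_{1..N < m.+1} | mnmwgt (val b) == m)
     (\prod_(i < N) ((val b) i)`!%:R^-1) *: 'X_[val b].

Definition schur_pz (R : fieldType) (N : nat) (m : int) : {mpoly R[N]} :=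
  match m with Posz n => schur_p R N n | Negz _ => 0 end.

Definition schur_s (R : fieldType) (N : nat) (la : seq nat) : {mpoly R[N]} :=
  \det (\matrix_(i < size la, j < size la)
          schur_pz R N ((nth 0%N la i)%:Z - i%:Z + j%:Z)).

(* the point sum_{a=1}^k [x_a] : t_m = sum_a x_a^m / m *)
Definition miwa_pt (R : fieldType) (N k : nat) (x : 'I_k -> R) : 'I_N -> R :=
  fun i => \sum_(a < k) x a ^+ i.+1 / (i.+1)%:R.

Definition is_partition (la : seq nat) : bool :=
  sorted geq la && all (fun a => 0 < a)%N la.

Definition Nlak (la : seq nat) (k : nat) : nat := sumn (drop k la).

From mathcomp Require Import all_boot all_order all_algebra.
From mathcomp Require Import mpoly.
From mathcomp Require Import perm ring zify.
Set Implicit Arguments. Unset Strict Implicit. Unset Printing Implicit Defensive.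
Import Order.TTheory GRing.Theory Num.Theory.
Local Open Scope ring_scope.

(* Since d/dt_i p_m = p_(m-i), multilinearity of the determinant writes
   d^alpha s_lambda as a sum of determinants det (p_(lambda_a - a - w_a + b)) over shifts w
   of total size wt alpha, and it suffices that each of them vanishes at t = sum_a [x_a].
   There the generating series of the p_m is inverse to E(z) = prod_a (1 - x_a z): the
   weighted Euler identity gives Newton's recurrence for the p_m, i.e. z d/dz of their
   series is (sum_a x_a z / (1 - x_a z)) times it, and this factor is -z E'(z) / E(z).
   Hence sum_(s <= k) E_s p_(n-s) = 0 for every index n <> 0 (up to the truncation order),
   so a column b >= k avoiding the index 0 is a combination of the k columns before it.
   If no such column existed, every column b >= k would meet a row a with
   lambda_a - a - w_a + b = 0; as lambda_a - a decreases this forces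
   sum_a w_a >= lambda_(k+1) + ... + lambda_l = N_(lambda,k) > wt alpha. *)

Lemma mnm_ind n (P : 'X_{1..n} -> Prop) :
  P 0%MM -> (forall m i, P m -> P (U_(i) + m)%MM) -> forall m, P m.
Proof.
move=> P0 PS m; elim: {m}(mdeg m) {-2}m (erefl (mdeg m)) => [|d IHd] m deg_m.
  by move/eqP: deg_m; rewrite mdeg_eq0 => /eqP ->.
have [i m_i_gt0 | m0] := pickP (fun j => 0 < m j)%N; last first.
  by move: deg_m; rewrite mdegE big1 // => j _; apply/eqP; rewrite -leqn0 leqNgt m0.
have Ui_le_m : (U_(i) <= m)%MM by apply/mnm_lepP => j; rewrite mnm1E; case: eqP => [<-|].
rewrite -(submK Ui_le_m) addmC; apply/PS/IHd.
by move: deg_m; rewrite -{1}(submK Ui_le_m) mdegD mdeg1 addn1 => -[].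
Qed.

Section MpolyDerivations.
Variables (R : comNzRingType) (n : nat).
Implicit Types (i : 'I_n).

Lemma mderiv_prod (I : eqType) (s : seq I) (F : I -> {mpoly R[n]}) i : uniq s ->
  (\prod_(a <- s) F a)^`M(i) =
  \sum_(c <- s) \prod_(a <- s) (if a == c then (F a)^`M(i) else F a).
Proof.
elim: s => [|y s IHs] /=; first by rewrite !big_nil mderivC.
case/andP=> y_notin_s uniq_s.
rewrite big_cons mderivM IHs // !big_cons eqxx mulr_sumr; congr (_ * _ + _).
  by apply: eq_big_seq => a a_in_s; case: eqP => // a_eq_y; rewrite -a_eq_y a_in_s in y_notin_s.
apply: eq_big_seq => c c_in_s; rewrite big_cons.
by case: eqP => // y_eq_c; rewrite y_eq_c c_in_s in y_notin_s.
Qed.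

Lemma mderiv_det l (A : 'M[{mpoly R[n]}]_l) i :
  (\det A)^`M(i) =
  \sum_(r < l) \det (\matrix_(a, b) if a == r then (A a b)^`M(i) else A a b).
Proof.
rewrite /determinant raddf_sum /= (eq_bigr (fun s : 'S_l => (-1) ^+ s *
  \sum_(r < l) \prod_a (if a == r then (A a (s a))^`M(i) else A a (s a)))); last first.
  move=> s _; rewrite mderivM -mderiv_prod ?index_enum_uniq //.
  suff -> : ((-1) ^+ s : {mpoly R[n]})^`M(i) = 0 by rewrite mul0r add0r.
  by case: (odd_perm s); rewrite ?expr0 ?expr1 ?mderivN mderivC ?oppr0.
under eq_bigr => s _ do rewrite mulr_sumr.
rewrite exchange_big; apply: eq_bigr => r _; apply: eq_bigr => s _.
by congr (_ * _); apply: eq_bigr => a _; rewrite mxE.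
Qed.

Lemma mnmwgt_euler_mpolyX (m : 'X_{1..n}) :
  \sum_(i < n) (i.+1)%:R *: ('X_i * ('X_[m])^`M(i)) = (mnmwgt m)%:R *: ('X_[m] : {mpoly R[n]}).
Proof.
have XmderivX i : 'X_i * ('X_[m])^`M(i) = (m i)%:R *: ('X_[m] : {mpoly R[n]}).
  rewrite mderivX -scalerAr; have [->|m_i_gt0] := posnP (m i); first by rewrite !scale0r.
  rewrite -mpolyXD addmC submK //; apply/mnm_lepP => j.
  by rewrite mnm1E; case: eqP => [<-|].
under eq_bigr => i _ do rewrite XmderivX scalerA -natrM.
rewrite -scaler_suml -natr_sum /mnmwgt; congr (_%:R *: _).
by apply: eq_bigr => i _; rewrite mulnC.
Qed.

End MpolyDerivations.

Lemma sum_ord_trunc (V : nmodType) (F : nat -> V) n0 n : (n0 <= n)%N ->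
  (forall s, (n0 <= s < n)%N -> F s = 0) -> \sum_(s < n) F s = \sum_(s < n0) F s.
Proof.
move=> n0_le_n F0; rewrite -!(big_mkord xpredT).
rewrite (@big_cat_nat _ _ _ n0 0 n _ _ (leq0n n0) n0_le_n) /=.
by rewrite [X in _ + X]big_nat_cond [X in _ + X]big1 ?addr0 // => s /andP[/F0].
Qed.

Section TruncatedSeries.
Variables (R : comNzRingType) (n : nat).
Implicit Types A B C D : {poly R}.

Definition eq_upto A B := forall m, (m <= n)%N -> A`_m = B`_m.

Lemma eq_uptoW A B : A = B -> eq_upto A B.
Proof. by move=> ->. Qed.

Lemma eq_upto_trans A B C : eq_upto A B -> eq_upto B C -> eq_upto A C.
Proof. by move=> AB BC m m_le_n; rewrite AB // BC. Qed.

Lemma eq_uptoD A B C D : eq_upto A B -> eq_upto C D -> eq_upto (A + C) (B + D).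
Proof. by move=> AB CD m m_le_n; rewrite !coefD AB // CD. Qed.

Lemma eq_uptoMr C A B : eq_upto A B -> eq_upto (A * C) (B * C).
Proof.
move=> AB m m_le_n; rewrite !coefM; apply: eq_bigr => j _.
by rewrite AB // (leq_trans (leq_ord j)).
Qed.

Lemma eq_uptoMl C A B : eq_upto A B -> eq_upto (C * A) (C * B).
Proof.
move=> AB m m_le_n; rewrite !coefM; apply: eq_bigr => j _.
by rewrite AB // (leq_trans (leq_subr _ _)).
Qed.

Definition xderiv A := 'X * A^`().

Lemma coef_xderiv A m : (xderiv A)`_m = A`_m *+ m.
Proof. by rewrite /xderiv coefXM coef_deriv; case: m. Qed.

Lemma xderivM A B : xderiv (A * B) = xderiv A * B + A * xderiv B.
Proof. by rewrite /xderiv derivM; ring. Qed.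

End TruncatedSeries.

Section SchurDeterminants.
Variables (R : fieldType) (N : nat).
Hypothesis Rchar0 : [pchar R] =i pred0.

Lemma natr_neq0 m : (0 < m)%N -> (m%:R : R) != 0.
Proof. by rewrite (proj1 (pcharf0P R) Rchar0) -lt0n. Qed.

Definition mnm_invfact (mu : 'X_{1..N}) : R := \prod_(i < N) ((mu i)`!%:R)^-1.

Lemma mcoeff_schur_p m mu :
  (schur_p R N m)@_mu = if mnmwgt mu == m then mnm_invfact mu else 0.
Proof.
rewrite /schur_p raddf_sum /=; case: eqP => [wt_mu|wt_mu]; last first.
  rewrite big1 // => b /eqP wt_b; rewrite mcoeffZ mcoeffX.
  by case: eqP => [mu_b|]; [case: wt_mu; rewrite -mu_b wt_b | rewrite mulr0].
have deg_mu : (mdeg mu < m.+1)%N by rewrite ltnS -wt_mu leq_mdeg_mnmwgt.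
rewrite (bigD1 (Sub mu deg_mu)) /=; last by rewrite wt_mu.
rewrite mcoeffZ mcoeffX eqxx mulr1 [X in _ + X]big1 ?addr0 // => b /andP[_ b_neq].
rewrite mcoeffZ mcoeffX; case: eqP => [b_mu|]; last by rewrite mulr0.
by case/eqP: b_neq; apply: val_inj; rewrite /= b_mu.
Qed.

Lemma mcoeff_schur_pz z mu :
  (schur_pz R N z)@_mu = if (mnmwgt mu)%:Z == z then mnm_invfact mu else 0.
Proof. by case: z => m /=; rewrite ?mcoeff_schur_p ?mcoeff0. Qed.

Lemma mderiv_schur_pz z (i : 'I_N) :
  (schur_pz R N z)^`M(i) = schur_pz R N (z - (i.+1)%:Z).
Proof.
apply/mpolyP => mu; rewrite mcoeff_mderiv !mcoeff_schur_pz mnmwgtD mnmwgt1.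
have -> : ((mnmwgt mu + i.+1)%N%:Z == z) = ((mnmwgt mu)%:Z == z - (i.+1)%:Z).
  by apply/eqP/eqP; lia.
case: eqP => _; last by rewrite mul0rn.
rewrite /mnm_invfact (bigD1 i) //= [in RHS](bigD1 i) //=.
under eq_bigr => j /negbTE j_neq_i do rewrite mnmDE mnm1E eq_sym j_neq_i addn0.
rewrite mnmDE mnm1E eqxx addn1 factS natrM invfM -!mulrnAl -mulr_natr.
by rewrite mulVf ?mul1r ?natr_neq0.
Qed.

Lemma euler_schur_p m :
  \sum_(i < N) (i.+1)%:R *: ('X_i * (schur_p R N m)^`M(i)) = m%:R *: schur_p R N m.
Proof.
under eq_bigr => i _ do rewrite raddf_sum mulr_sumr scaler_sumr.
rewrite exchange_big /= scaler_sumr; apply: eq_bigr => b /eqP wt_b.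
under eq_bigr => i _ do rewrite mderivZ -scalerAr scalerA mulrC -scalerA.
by rewrite -scaler_sumr mnmwgt_euler_mpolyX wt_b scalerA mulrC -scalerA.
Qed.

Definition schur_det l (r : 'I_l -> int) : {mpoly R[N]} :=
  \det (\matrix_(i < l, j < l) schur_pz R N (r i + j%:Z)).

Lemma schur_s_det la :
  schur_s R N la = schur_det (fun i : 'I_(size la) => (nth 0%N la i)%:Z - i%:Z).
Proof. by []. Qed.

Lemma eq_schur_det l (r1 r2 : 'I_l -> int) : r1 =1 r2 -> schur_det r1 = schur_det r2.
Proof. by move=> r12; congr (\det _); apply/matrixP => a b; rewrite !mxE r12. Qed.

Lemma mderiv_schur_det l (r : 'I_l -> int) (d : 'I_N) :
  (schur_det r)^`M(d) =
  \sum_(i0 < l) schur_det (fun i => if i == i0 then r i - (d.+1)%:Z else r i).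
Proof.
rewrite /schur_det mderiv_det; apply: eq_bigr => i0 _; congr (\det _).
apply/matrixP => a b; rewrite !mxE; case: eqP => // _.
by rewrite mderiv_schur_pz; congr schur_pz; ring.
Qed.

Lemma meval_mderivm_schur_det_eq0 (v : 'I_N -> R) l (r : 'I_l -> int) (alpha : 'X_{1..N}) :
  (forall w : 'I_l -> nat, (\sum_i w i)%N = mnmwgt alpha ->
     (schur_det (fun i => r i - (w i)%:Z)).@[v] = 0) ->
  ((schur_det r)^`M[alpha]).@[v] = 0.
Proof.
elim/mnm_ind: alpha r => [|alpha i IHalpha] r vanish.
  have := vanish (fun _ => 0%N); rewrite big1 // mnmwgt0 mderivm0m => /(_ erefl).
  by rewrite (@eq_schur_det _ _ r) // => j; rewrite subr0.
rewrite mderivmDm mderivmU1m mderiv_schur_det linear_sum raddf_sum /=.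
apply: big1 => i0 _; apply: IHalpha => w wt_w.
have := vanish (fun j => w j + (j == i0) * i.+1)%N.
rewrite big_split /= wt_w (bigD1 i0) //= eqxx mul1n big1 => [|j /negbTE ->]//.
rewrite addn0 mnmwgtD mnmwgt1 addnC => /(_ erefl); congr (meval _ _ = _).
apply: eq_schur_det => j.
by case: eqP => _ /=; rewrite ?mul1n ?mul0n ?addn0; lia.
Qed.

End SchurDeterminants.

Section MiwaPoint.
Variables (R : fieldType) (N k : nat) (x : 'I_k -> R).
Hypothesis Rchar0 : [pchar R] =i pred0.

Definition miwa_p (z : int) : R := (schur_pz R N z).@[miwa_pt x].

Lemma miwa_p_lt0 z : z < 0 -> miwa_p z = 0.
Proof. by case: z => // m _; rewrite /miwa_p meval0. Qed.

Definition power_sum m : R := \sum_(a < k) x a ^+ m.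

Lemma newton_miwa_p m :
  m%:R * miwa_p m = \sum_(i < N) power_sum i.+1 * miwa_p (m%:Z - (i.+1)%:Z).
Proof.
have := congr1 (meval (miwa_pt x)) (euler_schur_p R N m).
rewrite mevalZ raddf_sum /= => <-; apply: eq_bigr => i _.
rewrite mevalZ mevalM mevalXU -[schur_p R N m]/(schur_pz R N m) mderiv_schur_pz //.
rewrite mulrA; congr (_ * _); rewrite /miwa_pt mulr_sumr; apply: eq_bigr => a _.
by rewrite mulrCA divff ?mulr1 // natr_neq0.
Qed.

Definition miwa_gf : {poly R} := \poly_(m < N.+1) miwa_p m.

Definition geom_gf (y : R) : {poly R} := \poly_(m < N.+1) (if m == 0%N then 0 else y ^+ m).

Definition elem_gf : {poly R} := \prod_(a < k) (1 - x a *: 'X).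

Lemma xderiv_miwa_gf :
  eq_upto N (xderiv miwa_gf) ((\sum_(a < k) geom_gf (x a)) * miwa_gf).
Proof.
move=> m m_le_N; rewrite coef_xderiv coefM coef_poly ltnS m_le_N -mulr_natl.
have geom_gf0 : (\sum_(a < k) geom_gf (x a))`_0 = 0.
  by rewrite coef_sum big1 // => a _; rewrite coef_poly.
rewrite newton_miwa_p big_ord_recl geom_gf0 mul0r add0r.
rewrite (@sum_ord_trunc _ (fun i => power_sum i.+1 * miwa_p (m%:Z - (i.+1)%:Z)) m N) //.
  apply: eq_bigr => i _; rewrite coef_sum coef_poly /= /bump leq0n add1n.
  rewrite ltnS (leq_trans (leq_subr _ _) m_le_N); congr (_ * miwa_p _); last first.
    by have := ltn_ord i; lia.
  by apply: eq_bigr => a _; rewrite coef_poly ltnS (leq_trans (ltn_ord i) m_le_N).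
by move=> s /andP[m_le_s _]; rewrite miwa_p_lt0 ?mulr0 //; lia.
Qed.

Lemma xderiv_linear_factor y :
  eq_upto N (xderiv (1 - y *: 'X)) (- ((1 - y *: 'X) * geom_gf y)).
Proof.
move=> m m_le_N; rewrite coef_xderiv coefN mulrBl mul1r -scalerAl.
rewrite !coefB !coefZ coefXM coef1 coefX !coef_poly.
case: m m_le_N => [|[|m]] m_le_N /=.
- by rewrite mulr0 mulr0n subr0 oppr0.
- by rewrite ltnS m_le_N expr1 mulr0 mulr1 subr0 mulr1n sub0r.
by rewrite !ltnS m_le_N (ltnW m_le_N) mulr0 subrr mul0rn -exprS subrr oppr0.
Qed.

Lemma xderiv_prod_linear (I : Type) (s : seq I) (y : I -> R) :
  eq_upto N (xderiv (\prod_(a <- s) (1 - y a *: 'X)))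
    (- (\prod_(a <- s) (1 - y a *: 'X) * \sum_(a <- s) geom_gf (y a))).
Proof.
elim: s => [|a s IHs]; first by rewrite !big_nil /xderiv derivC mulr0 mulr0 oppr0.
rewrite !big_cons xderivM.
set E := \prod_(b <- s) _; set P := \sum_(b <- s) _.
apply: (@eq_upto_trans _ _ _ (- ((1 - y a *: 'X) * geom_gf (y a)) * E +
    (1 - y a *: 'X) * - (E * P))).
  by apply: eq_uptoD; [apply/eq_uptoMr/xderiv_linear_factor | apply: eq_uptoMl].
by apply: eq_uptoW; ring.
Qed.

Lemma coef0_elem_gf : elem_gf`_0 = 1.
Proof.
rewrite -horner_coef0 horner_prod big1 // => a _.
by rewrite hornerD hornerN hornerZ hornerX hornerC mulr0 subr0.
Qed.

Lemma size_prod_linear (I : Type) (s : seq I) (y : I -> R) :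
  (size (\prod_(a <- s) (1 - y a *: 'X))%R <= (size s).+1)%N.
Proof.
elim: s => [|a s IHs]; first by rewrite big_nil size_poly1.
rewrite big_cons (leq_trans (size_polyMleq _ _)) //.
have size_lin : (size (1 - y a *: 'X)%R <= 2)%N.
  rewrite (leq_trans (size_polyD _ _)) // size_poly1 size_polyN geq_max /=.
  by rewrite (leq_trans (size_scale_leq _ _)) ?size_polyX.
by move: IHs size_lin; rewrite /=; lia.
Qed.

Lemma coef_elem_gf_gt j : (k < j)%N -> elem_gf`_j = 0.
Proof.
move=> k_lt_j; apply: nth_default; apply: leq_trans k_lt_j.
have := size_prod_linear (index_enum 'I_k) x.
by rewrite /elem_gf [index_enum _]unlock -enumT size_enum_ord.
Qed.

Lemma elem_gf_miwa_p_conv m : (0 < m <= N)%N ->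
  \sum_(s < m.+1) elem_gf`_s * miwa_p (m%:Z - s%:Z) = 0.
Proof.
case/andP=> m_gt0 m_le_N.
have xderiv_EQ : eq_upto N (xderiv (elem_gf * miwa_gf)) 0.
  rewrite xderivM; apply: (@eq_upto_trans _ _ _
    (- (elem_gf * \sum_(a < k) geom_gf (x a)) * miwa_gf +
      elem_gf * ((\sum_(a < k) geom_gf (x a)) * miwa_gf))).
    apply: eq_uptoD; [apply: eq_uptoMr | apply: eq_uptoMl; exact: xderiv_miwa_gf].
    exact: xderiv_prod_linear.
  by apply: eq_uptoW; ring.
have /eqP := xderiv_EQ m m_le_N.
rewrite coef_xderiv coef0 -mulr_natr mulf_eq0 (negbTE (natr_neq0 Rchar0 m_gt0)) orbF.
move/eqP => EQ_m; rewrite -[RHS]EQ_m coefM; apply: eq_bigr => s _.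
rewrite coef_poly ltnS (leq_trans (leq_subr _ _) m_le_N); congr (_ * miwa_p _).
by have := ltn_ord s; lia.
Qed.

Lemma elem_gf_miwa_p_conv_shift (z : int) n : (k <= n)%N -> z != 0 -> z <= N%:Z ->
  \sum_(s < n.+1) elem_gf`_s * miwa_p (z - s%:Z) = 0.
Proof.
move=> k_le_n z_neq0 z_le_N; case: z z_neq0 z_le_N => m m_neq0 m_le_N; last first.
  by rewrite big1 // => s _; rewrite miwa_p_lt0 ?mulr0 //; lia.
have m_gt0 : (0 < m)%N by rewrite lt0n.
rewrite -(@sum_ord_trunc _ (fun s => elem_gf`_s * miwa_p (m%:Z - s%:Z)) n.+1 (m + n).+1);
  last 2 first.
- by rewrite ltnS leq_addl.
- by move=> s /andP[n_lt_s _]; rewrite coef_elem_gf_gt ?mul0r //; lia.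
rewrite (@sum_ord_trunc _ (fun s => elem_gf`_s * miwa_p (m%:Z - s%:Z)) m.+1 (m + n).+1);
  last 2 first.
- by rewrite ltnS leq_addr.
- by move=> s /andP[m_lt_s _]; rewrite miwa_p_lt0 ?mulr0 //; lia.
by apply: elem_gf_miwa_p_conv; rewrite m_gt0 -lez_nat.
Qed.

Lemma det_miwa_p_eq0 l (r : 'I_l -> int) (j0 : 'I_l) : (k <= j0)%N ->
  (forall i, r i + j0%:Z != 0) -> (forall i, r i + j0%:Z <= N%:Z) ->
  \det (\matrix_(i < l, j < l) miwa_p (r i + j%:Z)) = 0.
Proof.
move=> k_le_j0 nonzero bounded; apply/eqP; rewrite -det_tr; apply/det0P.
exists (\row_(a < l) if (a <= j0)%N then elem_gf`_(j0 - a) else 0).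
  apply/negP => /eqP/rowP/(_ j0); rewrite !mxE leqnn subnn coef0_elem_gf.
  by move/eqP; rewrite oner_eq0.
apply/rowP => i; rewrite !mxE.
under eq_bigr => a _ do rewrite !mxE.
rewrite (@sum_ord_trunc _
  (fun a => (if (a <= j0)%N then elem_gf`_(j0 - a) else 0) * miwa_p (r i + a%:Z)) j0.+1 l) //;
  last by move=> a /andP[j0_lt_a _]; rewrite leqNgt j0_lt_a mul0r.
rewrite (reindex_inj rev_ord_inj) /=.
rewrite -[RHS](elem_gf_miwa_p_conv_shift k_le_j0 (nonzero i) (bounded i)).
apply: eq_bigr => s _; rewrite subSS leq_subr subKn ?leq_ord //; congr (_ * miwa_p _).
by have := leq_ord s; lia.
Qed.

End MiwaPoint.

Lemma meval_schur_det (R : fieldType) N k (x : 'I_k -> R) l (r : 'I_l -> int) :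
  (schur_det R N r).@[miwa_pt x] = \det (\matrix_(i < l, j < l) miwa_p N x (r i + j%:Z)).
Proof. by rewrite /schur_det -det_map_mx; congr (\det _); apply/matrixP => a b; rewrite !mxE. Qed.

Lemma sum_suffix_le_card (T : numDomainType) l k (f : 'I_l -> T) (A : {set 'I_l}) :
  (k < l)%N -> (forall i j : 'I_l, (i <= j)%N -> f j <= f i) ->
  #|A| = #|[set j : 'I_l | (k <= j)%N]| ->
  \sum_(j in [set j : 'I_l | (k <= j)%N]) f j <= \sum_(i in A) f i.
Proof.
move=> k_lt_l f_noninc cardA; set B := [set j : 'I_l | _].
pose c := f (Ordinal k_lt_l).
have shift (X : {set 'I_l}) : \sum_(i in X) f i = \sum_(i in X) (f i - c) + c *+ #|X|.
  by rewrite sumrB sumr_const subrK.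
rewrite !shift cardA lerD2r (big_setID A) (big_setID (A := A) B) setIC /= lerD //.
apply: (@le_trans _ _ 0).
  rewrite -oppr_ge0 -sumrN; apply: sumr_ge0 => i /setDP[]; rewrite inE => k_le_i _.
  by rewrite oppr_ge0 subr_le0 f_noninc.
apply: sumr_ge0 => i /setDP[_]; rewrite inE -ltnNge => i_lt_k.
by rewrite subr_ge0 f_noninc // ltnW.
Qed.

Lemma sorted_geq_nth (s : seq nat) i j : sorted geq s -> (i <= j)%N -> (j < size s)%N ->
  (nth 0%N s j <= nth 0%N s i)%N.
Proof.
move=> s_sorted i_le_j j_lt_s.
have geq_trans : transitive geq by move=> a b c /= ba cb; apply: leq_trans cb ba.
have geq_refl : reflexive geq by move=> a; apply: leqnn.
exact: (sorted_leq_nth geq_trans geq_refl 0%N s_sorted i j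
  (leq_ltn_trans i_le_j j_lt_s) j_lt_s i_le_j).
Qed.

Lemma sumn_drop_nth (s : seq nat) k :
  sumn (drop k s) = (\sum_(j < size s | (k <= j)%N) nth 0%N s j)%N.
Proof.
rewrite (eq_bigl (fun j : 'I_(size s) => xpredT (nat_of_ord j) && (k <= j)%N)) //.
rewrite -(big_geq_mkord k (size s) xpredT (fun j => nth 0%N s j)) /=.
rewrite -[X in \big[_/_]_(X <= _ < _) _]add0n big_addn sumnE (big_nth 0%N) size_drop.
by apply: eq_bigr => i _; rewrite nth_drop addnC.
Qed.

Lemma Posz_sum (I : finType) (P : pred I) (F : I -> nat) :
  ((\sum_(i | P i) F i)%N)%:Z = \sum_(i | P i) (F i)%:Z.
Proof. exact: (big_morph Posz PoszD erefl). Qed.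

(* Column [j >= k] hits row [g j]; summing [w_(g j) = f (g j) + j] over the injective
   [g] and comparing with [lambda_j = f j + j] reduces the claim to [sum_suffix_le_card]. *)
Lemma Nlak_le_sum_shift (la : seq nat) k (w : 'I_(size la) -> nat) :
  sorted geq la -> (k < size la)%N ->
  (forall j0 : 'I_(size la), (k <= j0)%N ->
     exists i : 'I_(size la), (nth 0%N la i)%:Z - i%:Z - (w i)%:Z + j0%:Z = 0) ->
  (Nlak la k <= \sum_i w i)%N.
Proof.
move=> la_sorted k_lt_l hit; set l := size la.
pose f (i : 'I_l) : int := (nth 0%N la i)%:Z - i%:Z.
have f_noninc (i j : 'I_l) : (i <= j)%N -> f j <= f i.
  by move=> i_le_j; have := sorted_geq_nth la_sorted i_le_j (ltn_ord j); rewrite /f; lia.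
pose g (j : 'I_l) := odflt j [pick i | f i - (w i)%:Z + j%:Z == 0].
have gP (j : 'I_l) : (k <= j)%N -> f (g j) - (w (g j))%:Z + j%:Z = 0.
  move=> k_le_j; rewrite /g; case: pickP => [i /eqP // | miss].
  by case: (hit j k_le_j) => i hit_i; have := miss i; rewrite /f hit_i eqxx.
set B := [set j : 'I_l | (k <= j)%N].
have g_inj : {in B &, injective g}.
  move=> j1 j2; rewrite !inE => k_le_j1 k_le_j2 g12.
  have := gP j1 k_le_j1; have := gP j2 k_le_j2; rewrite g12.
  by move=> *; apply: ord_inj; lia.
have sum_w : \sum_(i in g @: B) (w i)%:Z =
             \sum_(i in g @: B) f i + \sum_(j in B) (j : nat)%:Z.
  rewrite (big_imset _ g_inj) (big_imset f g_inj) -big_split /=.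
  by apply: eq_bigr => j; rewrite inE => /gP; lia.
have sum_la : (Nlak la k)%:Z = \sum_(i in B) f i + \sum_(j in B) (j : nat)%:Z.
  rewrite /Nlak sumn_drop_nth Posz_sum -big_split /=.
  by apply: eq_big => [j|j _]; rewrite ?inE // /f subrK.
rewrite -lez_nat sum_la Posz_sum.
apply: (@le_trans _ _ (\sum_(i in g @: B) (w i)%:Z)); last first.
  by rewrite [X in _ <= X](bigID (mem (g @: B))) /= lerDl sumr_ge0.
rewrite sum_w lerD2r; apply: sum_suffix_le_card => //.
exact: card_in_imset.
Qed.

Lemma exists_free_column (la : seq nat) k (w : 'I_(size la) -> nat) :
  sorted geq la -> (k < size la)%N -> (\sum_i w i < Nlak la k)%N ->
  exists2 j0 : 'I_(size la), (k <= j0)%N &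
    forall i : 'I_(size la), (nth 0%N la i)%:Z - i%:Z - (w i)%:Z + j0%:Z != 0.
Proof.
move=> la_sorted k_lt_l w_lt_Nlak.
have [/existsP[j0 /andP[k_le_j0 /forallP free]] | /existsPn all_hit] := boolP
  [exists j0 : 'I_(size la), (k <= j0)%N &&
    [forall i : 'I_(size la), (nth 0%N la i)%:Z - i%:Z - (w i)%:Z + j0%:Z != 0]].
  by exists j0.
suff : (Nlak la k <= \sum_i w i)%N by rewrite leqNgt w_lt_Nlak.
apply: Nlak_le_sum_shift => // j0 k_le_j0.
have := all_hit j0; rewrite k_le_j0 /= => /forallPn[i /negPn/eqP hit].
by exists i.
Qed.

Theorem proposition2p3 (R : fieldType) (Rchar0 : [pchar R] =i pred0)
  (la : seq nat) (k : nat) (N : nat) (alpha : 'X_{1..N}) :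
  is_partition la ->
  (k < size la)%N ->
  (size la + nth 0%N la 0 <= N)%N ->
  (mnmwgt alpha < Nlak la k)%N ->
  forall x : 'I_k -> R,
    ((schur_s R N la)^`M[alpha]).@[@miwa_pt R N k x] = 0.
Proof.
move=> /andP[la_sorted _] k_lt_l la_le_N wt_lt_Nlak x.
rewrite schur_s_det; apply: (meval_mderivm_schur_det_eq0 Rchar0) => w wt_w.
have w_lt_Nlak : (\sum_i w i < Nlak la k)%N by rewrite wt_w.
have [j0 k_le_j0 free] := exists_free_column la_sorted k_lt_l w_lt_Nlak.
rewrite meval_schur_det; apply: (det_miwa_p_eq0 x Rchar0 k_le_j0 free) => i.
have := sorted_geq_nth la_sorted (leq0n i) (ltn_ord i).
by have := ltn_ord j0; lia.
Qed.
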